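(* Let $A=kQ/I$ be a gentle algebra over an algebraically closed field $k$, with graph $\Gamma_A$ and with $Q_E$ as defined below. Then $Q_E$ is the quiver of the Brauer graph algebra with Brauer graph $\Gamma_A$ (multiplicity one at every vertex) and with cyclic ordering of the edges of $\Gamma_A$ around each vertex induced by the arrows in $Q_E$.
   Context: Gentle: $Q$ finite connected, $I$ admissible; each vertex has at most two incoming and at most two outgoing arrows; for each arrow $\alpha$ at most one arrow $\beta$ with $\alpha\beta\notin I$ and at most one $\gamma$ with $\gamma\alpha\notin I$; $I$ generated by paths of length 2; for each arrow $\alpha$ at most one $\delta$ with $\alpha\delta\in I$ and at most one $\varepsilon$ with $\varepsilon\alpha\in I$. Paths composed left to right. Let $\mathcal M$ be the set of nontrivial maximal paths of $(Q,I)$ (paths $p\notin I$ with $\alpha p, p\alpha\in I$ for all arrows $\alpha$), and $\overline{\mathcal M}$ be $\mathcal M$ together with trivial paths $e_i$ at vertices $i$ that are a sink with one incoming arrow, a source with one outgoing arrow, or have exactly one incoming arrow $\alpha$ and one outgoing arrow $\beta$ with $\alpha\beta\notin I$. $\Gamma_A$ has vertices $\nu(m)$, $m\in\overline{\mathcal M}$, and for each vertex $i$ of $Q$ an edge $E_i$ joining the vertices of the two elements of $\overline{\mathcal M}$ through $i$. $Q_E$ is the quiver with the vertices of $Q$ and with arrows those of $Q$ plus, for each $m\in\mathcal M$, a new arrow $\beta_m$ from $t(m)$ to $s(m)$; the arrows of $Q_E$ on $m$ together with $\beta_m$ determine a cyclic order of the edges $E_i$ ($i$ on $m$) around $\nu(m)$,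 and $\nu(e_i)$ carries only $E_i$. Quiver of a Brauer graph algebra: for a Brauer graph $\Gamma$ (finite connected graph with cyclic ordering of edges around each vertex and multiplicities), the quiver has one vertex $i$ per edge $E_i$ and an arrow $i\to j$ whenever $E_j$ is the direct successor of $E_i$ in the cyclic ordering around a common vertex; for a leaf edge whose leaf vertex has multiplicity one no loop is added. *)

From mathcomp Require Import all_boot all_algebra.
Set Implicit Arguments. Unset Strict Implicit. Unset Printing Implicit Defensive.

(* A finite quiver with a set of length-2 zero relations.
   grel a b = true  means  the path  a b  (left-to-right composition) is one of
   the generators of I. *)
Record bquiver := BQuiver {
  qV : finType;
  qA : finType;
  qs : qA -> qV;
  qt : qA -> qV;
  grel : qA -> qA -> bool
}.

Section Gentle.
Variable Q : bquiver.
Local Notation V := (qV Q).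
Local Notation Ar := (qA Q).
Local Notation s := (@qs Q).
Local Notation t := (@qt Q).
Local Notation rel := (@grel Q).

Definition composable (p : seq Ar) : bool :=
  if p is a :: p' then path (fun x y => t x == s y) a p' else true.

(* a composable path lies outside I (I is generated by the length-2 paths in
   grel, hence monomial: a path is in I iff it contains a generator) *)
Definition nonzero_path (p : seq Ar) : bool :=
  if p is a :: p' then path (fun x y => ~~ rel x y) a p' else true.

Definition indeg (i : V) := #|[pred a : Ar | t a == i]|.
Definition outdeg (i : V) := #|[pred a : Ar | s a == i]|.

Definition connected_quiver : Prop :=
  forall i j : V,
    connect [rel x y : V | [exists a : Ar,
        ((s a == x) && (t a == y)) || ((s a == y) && (t a == x))]] i j.

(* admissible: I is generated by paths of length 2 (so I is contained in R^2),
   and R^N is contained in I for some N *)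
Definition admissible : Prop :=
  exists N : nat, forall p : seq Ar,
    N <= size p -> composable p -> ~~ nonzero_path p.

Definition gentle : Prop :=
  [/\ connected_quiver,
      (forall a b, rel a b -> t a = s b),
      admissible &
   [/\
      (forall i, indeg i <= 2 /\ outdeg i <= 2),
      (forall a, #|[pred b | (t a == s b) && ~~ rel a b]| <= 1 /\
                 #|[pred c | (t c == s a) && ~~ rel c a]| <= 1) &
      (forall a, #|[pred d | rel a d]| <= 1 /\ #|[pred e | rel e a]| <= 1)]].

(* Paths of Q: a starting vertex together with a sequence of arrows.
   (i, [::]) is the trivial path e_i. *)
Definition qpath := (V * seq Ar)%type.

Definition good_path (x : qpath) : bool :=
  [&& (if x.2 is a :: _ then s a == x.1 else true),
      composable x.2 & nonzero_path x.2].

Definition psource (x : qpath) : V := x.1.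
Definition ptarget (x : qpath) : V := last x.1 (map t x.2).
Definition pverts (x : qpath) : seq V := x.1 :: map t x.2.

Definition is_max (x : qpath) : bool :=
  if x.2 is a :: p' then
    [&& good_path x,
        [forall al : Ar, (t al == s a) ==> rel al a] &
        [forall al : Ar, (s al == t (last a p')) ==> rel (last a p') al]]
  else false.

(* vertices i whose trivial path e_i belongs to Mbar *)
Definition triv_cond (i : V) : bool :=
  [|| (outdeg i == 0) && (indeg i == 1),
      (indeg i == 0) && (outdeg i == 1) |
      [&& indeg i == 1, outdeg i == 1 &
          [exists a : Ar, exists b : Ar,
              [&& t a == i, s b == i & ~~ rel a b]]]].

Definition in_Mbar (x : qpath) : bool :=
  if x.2 is [::] then triv_cond x.1 else is_max x.

Definition GVert := {x : qpath | in_Mbar x}.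
(* half-edges: an element m of Mbar together with a position j on m;
   the half-edge (m, j) belongs to the edge E_i, i = j-th vertex of m *)
Definition GHalf := {h : qpath * nat | in_Mbar h.1 && (h.2 < size (pverts h.1))}.

Lemma ghalf_vert (h : GHalf) : in_Mbar (sval h).1.
Proof. by case/andP: (valP h). Qed.

Definition gv (h : GHalf) : GVert := exist _ (sval h).1 (ghalf_vert h).
Definition ge (h : GHalf) : V := nth (sval h).1.1 (pverts (sval h).1) (sval h).2.

Lemma gsucc_proof (h : GHalf) :
  in_Mbar (sval h).1 &&
  ((((sval h).2).+1 %% size (pverts (sval h).1)) < size (pverts (sval h).1)).
Proof. by rewrite ghalf_vert ltn_pmod. Qed.

(* cyclic order around nu(m) induced by the arrows of Q_E: the arrows of m
   followed by beta_m (from t(m) back to s(m)) *)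
Definition gsucc (h : GHalf) : GHalf :=
  exist _ ((sval h).1, (((sval h).2).+1 %% size (pverts (sval h).1)))
        (gsucc_proof h).

Definition QEArrow := (Ar + {x : qpath | is_max x})%type.
Definition qe_src (a : QEArrow) : V :=
  match a with inl al => s al | inr m => ptarget (sval m) end.
Definition qe_tgt (a : QEArrow) : V :=
  match a with inl al => t al | inr m => psource (sval m) end.

End Gentle.

(* hv h = vertex of the half-edge h, he h = edge containing h,
   succ = cyclic successor of half-edges around each vertex, mult = multiplicity *)
Definition brauer_graph {BV BH BE : Type} (hv : BH -> BV) (he : BH -> BE)
    (succ : BH -> BH) (mult : BV -> nat) : Prop :=
  ([/\
      (forall e, exists h1 h2, [/\ h1 <> h2, he h1 = e, he h2 = e &
                  forall h, he h = e -> h = h1 \/ h = h2]),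
      bijective succ,
      (forall h, hv (succ h) = hv h),
      (forall h h', hv h = hv h' -> exists n, iter n succ h = h') &
      (forall v, 0 < mult v) /\
      (forall P : BV -> Prop,
         (forall h h', he h = he h' -> P (hv h) -> P (hv h')) ->
         forall v w, P v -> P w)]).

(* arrows of the quiver of the Brauer graph algebra: one arrow
   he h -> he (succ h) for every half-edge h, except at a leaf vertex
   (exactly one half-edge) of multiplicity one *)
Definition brauer_arrow {BV BH : Type} (hv : BH -> BV) (mult : BV -> nat) :=
  {h : BH | ~ (mult (hv h) = 1 /\ forall h', hv h' = hv h -> h' = h)}.

Definition ba_src {BV BH BE : Type} (hv : BH -> BV) (he : BH -> BE)
   (mult : BV -> nat) (a : brauer_arrow hv mult) : BE := he (sval a).
Definition ba_tgt {BV BH BE : Type} (hv : BH -> BV) (he : BH -> BE)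
   (succ : BH -> BH) (mult : BV -> nat) (a : brauer_arrow hv mult) : BE :=
  he (succ (sval a)).

Definition same_quiver {A1 A2 W : Type} (s1 t1 : A1 -> W) (s2 t2 : A2 -> W) : Prop :=
  exists f : A1 -> A2, bijective f /\ forall a, s2 (f a) = s1 a /\ t2 (f a) = t1 a.

From Pilot Require Import Defs.
From mathcomp Require Import all_boot all_algebra zify.
From Stdlib Require Import ProofIrrelevance ClassicalEpsilon.
Set Implicit Arguments. Unset Strict Implicit. Unset Printing Implicit Defensive.

(* In a gentle quiver an arrow a has at most one continuation b with ab not in
   I and at most one predecessor, and admissibility bounds such chains; so a
   extends uniquely to a maximal path, on which it sits at a unique position.
   Hence the arrows of Q_E correspond to the half-edges (m, j) of Gamma_A on
   nontrivial maximal paths m: the j-th arrow of m, or beta_m at the last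
   position; it runs from E_(m_j) to E_(m_(j+1)), exactly as the Brauer arrow
   of the half-edge. Trivial elements of Mbar give leaves of multiplicity one,
   which carry no arrow. Each vertex i lies on exactly two elements of Mbar
   (counted with position): a half-edge at i follows an arrow into i, starts a
   maximal path with an arrow out of i, or is a trivial path; the degree and
   relation conditions make this count 2 in every configuration. *)

Lemma path_maximal_uniq (T : Type) (e : T -> T -> bool) :
  (forall x y y', e x y -> e x y' -> y = y') ->
  forall x p q, path e x p -> path e x q ->
  (forall y, ~~ e (last x p) y) -> (forall y, ~~ e (last x q) y) -> p = q.
Proof.
move=> e_fun x p; elim: p x => [|y p IHp] x [|z q] //=.
- by move=> _ /andP[xz _] /(_ z); rewrite xz.
- by move=> /andP[xy _] _ _ /(_ y); rewrite xy.
move=> /andP[xy py] /andP[xz qz]; rewrite -(e_fun _ _ _ xy xz) in qz *.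
by move=> p_max q_max; rewrite (IHp y q).
Qed.

Lemma onth_split (T : Type) (s : seq T) j a :
  onth s j = Some a -> s = take j s ++ a :: drop j.+1 s.
Proof.
move=> sj; have lt_j : j < size s by rewrite -onthTE sj.
by rewrite -{1}(cat_take_drop j s) (drop_nth a lt_j) (onth_nth _ _ _ _ sj).
Qed.

Lemma card_le_inj (T U : finType) (A : {set T}) (B : {pred U}) (f : T -> U) :
  {in A &, injective f} -> {in A, forall x, f x \in B} -> #|A| <= #|B|.
Proof.
move=> f_inj fAB; rewrite -(card_in_imset f_inj); apply: subset_leq_card.
by apply/subsetP=> _ /imsetP[x Ax ->]; apply: fAB.
Qed.

(* At a vertex with in- and out-degrees din, dout: g (resp. z) pairs (c, b) of
   an arrow into and an arrow out of it with cb not in I (resp. in I), and n0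
   outgoing arrows that start a maximal path. *)
Lemma vertex_count_arith din dout g z n0 :
  din <= 2 -> dout <= 2 -> 0 < din + dout -> g + z = din * dout ->
  g <= minn din dout -> z <= minn din dout -> n0 + g = dout ->
  din + n0 + [|| (dout == 0) && (din == 1), (din == 0) && (dout == 1)
             | [&& din == 1, dout == 1 & 0 < g]] = 2.
Proof.
case: din dout => [|[|[|din]]] [|[|[|dout]]] //= _ _ _;
  case: g => [|g] /=; rewrite /minn /=; lia.
Qed.

Lemma rel_bijective (A B : Type) (R : A -> B -> Prop) :
  (forall a, exists b, R a b) -> (forall b, exists a, R a b) ->
  (forall a b b', R a b -> R a b' -> b = b') ->
  (forall a a' b, R a b -> R a' b -> a = a') ->
  exists f : A -> B, bijective f /\ forall a, R a (f a).
Proof.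
move=> R_total R_onto R_fun R_inj.
pose f a := proj1_sig (constructive_indefinite_description _ (R_total a)).
pose g b := proj1_sig (constructive_indefinite_description _ (R_onto b)).
have Rf a : R a (f a) by rewrite /f; case: constructive_indefinite_description.
have Rg b : R (g b) b by rewrite /g; case: constructive_indefinite_description.
by exists f; split=> //; exists g => [a | b]; [apply: R_inj (Rf a) | apply: R_fun (Rg b)].
Qed.

Section GentleGamma.
Variable Q : bquiver.
Hypothesis HQ : gentle Q.
Local Notation V := (qV Q).
Local Notation Ar := (qA Q).
Local Notation s := (@qs Q).
Local Notation t := (@qt Q).
Local Notation grel := (@Defs.grel Q).

Definition nzstep : rel Ar := fun a b => (t a == s b) && ~~ grel a b.
Definition initial (a : Ar) := [forall c, ~~ nzstep c a].
Definition terminal (a : Ar) := [forall b, ~~ nzstep a b].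

Lemma is_maxE v a p : is_max (v, a :: p) =
  [&& s a == v, path nzstep a p, initial a & terminal (last a p)].
Proof.
rewrite /is_max /good_path /= [path nzstep _ _]path_relI -!andbA.
do 3 congr andb; last congr andb; apply: eq_forallb => c.
  by rewrite negb_and negbK implybE.
by rewrite negb_and negbK implybE eq_sym.
Qed.

Lemma nzstep_functional a b b' : nzstep a b -> nzstep a b' -> b = b'.
Proof.
case: HQ => _ _ _ [_ /(_ a)[uniq_nzstep _] _].
by move=> ab ab'; apply: (card_le1_eqP uniq_nzstep).
Qed.

Lemma nzstep_injective a c c' : nzstep c a -> nzstep c' a -> c = c'.
Proof.
case: HQ => _ _ _ [_ /(_ a)[_ uniq_nzstep] _].
by move=> ca c'a; apply: (card_le1_eqP uniq_nzstep).
Qed.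

Lemma grel_functional a d d' : grel a d -> grel a d' -> d = d'.
Proof.
case: HQ => _ _ _ [_ _ /(_ a)[uniq_grel _]].
by move=> ad ad'; apply: (card_le1_eqP uniq_grel).
Qed.

Lemma grel_injective a e e' : grel e a -> grel e' a -> e = e'.
Proof.
case: HQ => _ _ _ [_ _ /(_ a)[_ uniq_grel]].
by move=> ea e'a; apply: (card_le1_eqP uniq_grel).
Qed.

Lemma nzstep_path_bounded : exists N, forall a p, path nzstep a p -> size p < N.
Proof.
case: HQ => _ _ [N nilpotent] _; exists N => a p nz_ap.
have [comp_ap nonzero_ap] : composable (a :: p) /\ nonzero_path (a :: p).
  by apply/andP; rewrite /= -path_relI.
rewrite ltnNge; apply: contraL nonzero_ap => le_N.
by apply: nilpotent comp_ap; apply: leqW.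
Qed.

Lemma max_path_through a : exists p1 p2,
  [/\ sorted nzstep (p1 ++ a :: p2), initial (head a p1) & terminal (last a p2)].
Proof.
have [N bounded] := nzstep_path_bounded.
suff extend d p1 p2 : sorted nzstep (p1 ++ a :: p2) -> N <= size p1 + size p2 + d ->
    exists p1 p2, [/\ sorted nzstep (p1 ++ a :: p2), initial (head a p1)
                    & terminal (last a p2)].
  by apply: (extend N [::] [::]).
elim: d p1 p2 => [|d IHd] p1 p2 nz_p le_N.
  case: p1 nz_p le_N => [|b p1] /= /bounded; rewrite ?size_cat /=; lia.
have [term_p2|] := boolP (terminal (last a p2)); last first.
  case/forallPn=> b; rewrite negbK => nz_b.
  apply: (IHd p1 (rcons p2 b)); last by rewrite size_rcons; lia.
  by move: nz_p; rewrite !sorted_cat_cons rcons_path nz_b andbT.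
have [init_p1|] := boolP (initial (head a p1)); first by exists p1, p2.
case/forallPn=> c; rewrite negbK => nz_c.
apply: (IHd (c :: p1) p2); last by rewrite /=; lia.
by case: p1 nz_p nz_c {le_N} => [|b p1] /= -> ->.
Qed.

Lemma max_path_through_uniq a p1 p2 q1 q2 :
  sorted nzstep (p1 ++ a :: p2) -> initial (head a p1) -> terminal (last a p2) ->
  sorted nzstep (q1 ++ a :: q2) -> initial (head a q1) -> terminal (last a q2) ->
  p1 = q1 /\ p2 = q2.
Proof.
rewrite !sorted_cat_cons => /andP[nz_p1 nz_p2] init_p term_p /andP[nz_q1 nz_q2] init_q term_q.
have maximal_back r1 : initial (head a r1) -> forall c, ~~ nzstep c (last a (rev r1)).
  by case: r1 => [|b r1] /= /forallP init_r c; rewrite ?rev_cons ?last_rcons.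
split; last by apply: (path_maximal_uniq (@nzstep_functional)) nz_p2 nz_q2 _ _;
  apply/forallP.
apply: (inv_inj (@revK _)); apply: (path_maximal_uniq (e := fun x y => nzstep y x)) _ _ _
  (maximal_back _ init_p) (maximal_back _ init_q).
- by move=> x y y'; apply: nzstep_injective.
- by move: nz_p1; rewrite -rev_sorted rev_rcons.
- by move: nz_q1; rewrite -rev_sorted rev_rcons.
Qed.

Lemma is_max_cat v p1 a p2 : is_max (v, p1 ++ a :: p2) =
  [&& s (head a p1) == v, sorted nzstep (p1 ++ a :: p2),
      initial (head a p1) & terminal (last a p2)].
Proof. by case: p1 => [|b p1]; rewrite /= is_maxE // last_cat. Qed.

Lemma max_path_position_uniq (m m' : qpath Q) j j' a : is_max m -> is_max m' ->
  onth m.2 j = Some a -> onth m'.2 j' = Some a -> m = m' /\ j = j'.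
Proof.
case: m m' => [v p] [v' p'] /= + + pj p'j'.
have le_j : j <= size p by rewrite ltnW // -onthTE pj.
have le_j' : j' <= size p' by rewrite ltnW // -onthTE p'j'.
rewrite (onth_split pj) (onth_split p'j') !is_max_cat.
case/and4P=> [/eqP <- nz_p init_p term_p] /and4P[/eqP <- nz_p' init_p' term_p'].
have [eq1 eq2] := max_path_through_uniq nz_p init_p term_p nz_p' init_p' term_p'.
have eq_j : j = j' by rewrite -(size_takel le_j) eq1 size_takel.
have eq_p : p = p' by rewrite (onth_split pj) (onth_split p'j') eq1 eq2.
by rewrite eq1 eq_p eq_j.
Qed.

Lemma arrow_on_max_path a : exists (m : qpath Q) j, is_max m /\ onth m.2 j = Some a.
Proof.
have [p1 [p2 [nz_p init_p term_p]]] := max_path_through a.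
exists (s (head a p1), p1 ++ a :: p2), (size p1).
by rewrite is_max_cat eqxx nz_p init_p term_p onth_cat ltnn subnn.
Qed.

Lemma size_pverts (m : qpath Q) : size (pverts m) = (size m.2).+1.
Proof. by rewrite /= size_map. Qed.

Lemma pverts_target (m : qpath Q) j a :
  onth m.2 j = Some a -> nth m.1 (pverts m) j.+1 = t a.
Proof. by move=> mj; rewrite /= (nth_map a) ?(onth_nth _ _ _ _ mj) // -onthTE mj. Qed.

Lemma pverts_source (m : qpath Q) j a :
  is_max m -> onth m.2 j = Some a -> nth m.1 (pverts m) j = s a.
Proof.
case: m => v [|b p] //; rewrite is_maxE => /and4P[/eqP sb nz_p _ _].
case: j => [[<-] //| j /= pj].
have lt_j : j < size p by rewrite -onthTE pj.
have /= /andP[/eqP t_s _] := sortedP b (nz_p : sorted nzstep (b :: p)) j lt_j.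
by rewrite -(onth_nth b _ _ _ pj) -t_s -(nth_map b v t) // ltnW.
Qed.

Lemma pverts_last (m : qpath Q) : nth m.1 (pverts m) (size m.2) = ptarget m.
Proof. by rewrite -[size m.2]/((size m.2).+1.-1) -size_pverts nth_last. Qed.

Definition slot := ((Ar + Ar) + V)%type.

Definition slot_at (i : V) (x : slot) : bool :=
  match x with
  | inl (inl a) => t a == i
  | inl (inr b) => (s b == i) && initial b
  | inr v => (v == i) && triv_cond i
  end.

(* A half-edge (m, j) with j > 0 sits just after the arrow m_(j-1) into its
   vertex, a half-edge (m, 0) on a nontrivial m just before the initial arrow
   m_0 out of it; the remaining ones are trivial paths. *)
Definition half_slot (h : GHalf Q) : slot :=
  let: (m, j) := sval h in
  match j, onth m.2 j.-1 with
  | _.+1, Some a => inl (inl a)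
  | 0, Some b => inl (inr b)
  | _, None => inr m.1
  end.

Variant half_slot_spec (h : GHalf Q) : slot -> Type :=
  | SlotIn m j a of sval h = (m, j.+1) & is_max m & onth m.2 j = Some a :
      half_slot_spec h (inl (inl a))
  | SlotOut m b of sval h = (m, 0) & is_max m & onth m.2 0 = Some b :
      half_slot_spec h (inl (inr b))
  | SlotTriv v of sval h = ((v, [::]), 0) & triv_cond v :
      half_slot_spec h (inr v).

Lemma half_slotP h : half_slot_spec h (half_slot h).
Proof.
case: h => [[[v [|b p]] [|j]] mj]; have /andP[in_m lt_j] := mj;
  rewrite /half_slot /= in in_m lt_j *.
- exact: SlotTriv.
- by [].
- exact: SlotOut.
case pj: (onth (b :: p) j) => [a|]; first exact: SlotIn.
have : j < size (b :: p) by rewrite /= -(size_map t).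
by rewrite -onthTE pj.
Qed.

Lemma slot_at_half h : slot_at (Defs.ge h) (half_slot h).
Proof.
rewrite /Defs.ge; case: half_slotP => [m j a -> _ ma | m b -> mm mb | v -> tv].
- by rewrite (pverts_target ma) /= eqxx.
- rewrite (pverts_source mm mb) /= eqxx.
  by case: m mm mb => v [|c p] //; rewrite is_maxE => /and4P[_ _ init_c _] [<-].
- by rewrite /= eqxx.
Qed.

Lemma half_slot_inj : injective half_slot.
Proof.
move=> h h'; case: half_slotP => [m j a hE mm ma | m b hE mm mb | v hE _].
- case: half_slotP => // m' j' a' h'E mm' ma' [eq_a]; rewrite -eq_a in ma'.
  have [eq_m eq_j] := max_path_position_uniq mm mm' ma ma'.
  by apply: val_inj; rewrite /= hE h'E eq_m eq_j.
- case: half_slotP => // m' b' h'E mm' mb' [eq_b]; rewrite -eq_b in mb'.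
  have [eq_m _] := max_path_position_uniq mm mm' mb mb'.
  by apply: val_inj; rewrite /= hE h'E eq_m.
- case: half_slotP => // v' h'E _ [eq_v].
  by apply: val_inj; rewrite /= hE h'E eq_v.
Qed.

Lemma max_half_mem (m : qpath Q) j :
  is_max m -> j <= size m.2 -> in_Mbar m && (j < size (pverts m)).
Proof. by rewrite size_pverts ltnS andbC => + ->; case: m => v []. Qed.

Definition max_half (m : qpath Q) j (mm : is_max m) (le_j : j <= size m.2) : GHalf Q :=
  exist _ (m, j) (max_half_mem mm le_j).

Lemma initial_position (m : qpath Q) j b :
  is_max m -> onth m.2 j = Some b -> initial b -> j = 0.
Proof.
case: m => v [|c p] //; rewrite is_maxE => /and4P[_ nz_p _ _].
case: j => // j /= pj /forallP/(_ (nth c (c :: p) j)); apply: contraNeq => _.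
have lt_j : j < size p by rewrite -onthTE pj.
by have := sortedP c (nz_p : sorted nzstep (c :: p)) j lt_j; rewrite /= (onth_nth _ _ _ _ pj).
Qed.

Lemma half_slot_onto i x : slot_at i x -> exists h, Defs.ge h = i /\ half_slot h = x.
Proof.
case: x => [[a|b]|v] /=.
- move=> /eqP ta; have [m [j [mm ma]]] := arrow_on_max_path a.
  have le_j : j.+1 <= size m.2 by rewrite -onthTE ma.
  exists (max_half mm le_j).
  by split; [rewrite -ta; apply: pverts_target ma | rewrite /half_slot /= ma].
- case/andP=> /eqP sb init_b; have [m [j [mm mb]]] := arrow_on_max_path b.
  have j0 := initial_position mm mb init_b; subst j.
  exists (max_half mm (leq0n _)).
  split; first by rewrite -sb; apply: pverts_source mm mb.
  by rewrite /half_slot /=; case: m.2 mb => [|c p] // [->].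
- case/andP=> /eqP -> tv.
  have mem_i : in_Mbar (i, [::]) && (0 < size (pverts (i, [::]))) by rewrite /in_Mbar /= tv.
  by exists (exist _ ((i, [::]), 0) mem_i).
Qed.

Lemma card_slot_at i :
  #|slot_at i| = indeg i + #|[pred b | (s b == i) && initial b]| + triv_cond i.
Proof.
rewrite /indeg -!sum1_card !big_sumType; congr (_ + _ + _).
have [tv | ntv] := boolP (triv_cond i).
  by rewrite (eq_bigl (pred1 i)) ?big_pred1_eq // => v; rewrite unfold_in /= tv andbT.
by rewrite big_pred0 // => v; rewrite unfold_in /= (negbTE ntv) andbF.
Qed.

Definition meeting_pairs (i : V) : {set Ar * Ar} :=
  setX [set a | t a == i] [set b | s b == i].
Definition zero_pairs i := meeting_pairs i :&: [set p | grel p.1 p.2].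
Definition nz_pairs i := meeting_pairs i :\: [set p | grel p.1 p.2].

Lemma card_pairs i : #|nz_pairs i| + #|zero_pairs i| = indeg i * outdeg i.
Proof. by rewrite addnC cardsID cardsX !cardsE. Qed.

Lemma mem_nz_pairs i a b : ((a, b) \in nz_pairs i) = nzstep a b && (s b == i).
Proof.
rewrite !inE /nzstep /=.
by have [-> | _] := eqVneq (s b) i; rewrite ?andbT ?andbF // andbC.
Qed.

Lemma mem_zero_pairs i a b :
  ((a, b) \in zero_pairs i) = [&& t a == i, s b == i & grel a b].
Proof. by rewrite !inE andbA. Qed.

Lemma nz_pairs_fst_inj i : {in nz_pairs i &, injective fst}.
Proof.
move=> [a b] [a' b']; rewrite !mem_nz_pairs => /andP[ab _] /andP[+ _] /= eq_a.
by rewrite -eq_a => ab'; rewrite (nzstep_functional ab ab').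
Qed.

Lemma nz_pairs_snd_inj i : {in nz_pairs i &, injective snd}.
Proof.
move=> [a b] [a' b']; rewrite !mem_nz_pairs => /andP[ab _] /andP[+ _] /= eq_b.
by rewrite -eq_b => a'b; rewrite (nzstep_injective ab a'b).
Qed.

Lemma zero_pairs_fst_inj i : {in zero_pairs i &, injective fst}.
Proof.
move=> [a b] [a' b']; rewrite !mem_zero_pairs => /and3P[_ _ ab] /and3P[_ _ +] /= eq_a.
by rewrite -eq_a => ab'; rewrite (grel_functional ab ab').
Qed.

Lemma zero_pairs_snd_inj i : {in zero_pairs i &, injective snd}.
Proof.
move=> [a b] [a' b']; rewrite !mem_zero_pairs => /and3P[_ _ ab] /and3P[_ _ +] /= eq_b.
by rewrite -eq_b => a'b; rewrite (grel_injective ab a'b).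
Qed.

Lemma card_pairs_le i : #|nz_pairs i| <= minn (indeg i) (outdeg i) /\
                        #|zero_pairs i| <= minn (indeg i) (outdeg i).
Proof.
have in_t p : p \in meeting_pairs i -> p.1 \in [pred a | t a == i].
  by case: p => a b; rewrite in_setX !inE => /andP[].
have in_s p : p \in meeting_pairs i -> p.2 \in [pred b | s b == i].
  by case: p => a b; rewrite in_setX !inE => /andP[].
have nz_meet p : p \in nz_pairs i -> p \in meeting_pairs i by rewrite inE => /andP[].
have zero_meet p : p \in zero_pairs i -> p \in meeting_pairs i by rewrite inE => /andP[].
rewrite !leq_min; split; apply/andP; split.
- by apply: card_le_inj (@nz_pairs_fst_inj i) _ => p /nz_meet /in_t.
- by apply: card_le_inj (@nz_pairs_snd_inj i) _ => p /nz_meet /in_s.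
- by apply: card_le_inj (@zero_pairs_fst_inj i) _ => p /zero_meet /in_t.
- by apply: card_le_inj (@zero_pairs_snd_inj i) _ => p /zero_meet /in_s.
Qed.

Lemma card_initial_out i :
  #|[pred b | (s b == i) && initial b]| + #|nz_pairs i| = outdeg i.
Proof.
rewrite -(card_in_imset (@nz_pairs_snd_inj i)) /outdeg.
rewrite -(cardID initial [pred b | s b == i]); congr (_ + _); apply: eq_card => b.
rewrite !inE; apply/imsetP/andP => [[[c b'] + ->] | [/forallPn[c] + sb]] /=.
  rewrite mem_nz_pairs unfold_in => /andP[cb ->]; split=> //.
  by apply/forallPn; exists c; rewrite negbK.
by rewrite negbK => cb; exists (c, b); rewrite ?mem_nz_pairs ?cb.
Qed.

Lemma triv_condE i : triv_cond i =
  [|| (outdeg i == 0) && (indeg i == 1), (indeg i == 0) && (outdeg i == 1)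
    | [&& indeg i == 1, outdeg i == 1 & 0 < #|nz_pairs i|]].
Proof.
rewrite /triv_cond; congr [|| _, _ | [&& _, _ & _]].
apply/existsP/card_gt0P => [[a /existsP[b /and3P[/eqP ta /eqP sb nab]]] | [[a b]]].
  by exists (a, b); rewrite mem_nz_pairs /nzstep ta sb eqxx nab.
rewrite mem_nz_pairs => /andP[/andP[/eqP tab nab] sb].
by exists a; apply/existsP; exists b; rewrite tab sb nab.
Qed.

Lemma deg_le2 (i : V) : indeg i <= 2 /\ outdeg i <= 2.
Proof. by case: HQ => _ _ _ [/(_ i)]. Qed.

Lemma deg_pos (i : V) : 0 < #|Ar| -> 0 < indeg i + outdeg i.
Proof.
case/card_gt0P=> a _; case: HQ => /(_ i (s a))/connectP[[|j p] /= + last_i] _ _ _.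
  move=> _; rewrite /= in last_i; rewrite -last_i addn_gt0; apply/orP; right.
  by apply/card_gt0P; exists a; rewrite inE.
by case/andP=> /existsP[b /orP[/andP[/eqP bi _] | /andP[_ /eqP bi]]] _;
  rewrite addn_gt0; apply/orP; [right | left]; apply/card_gt0P; exists b; rewrite inE bi.
Qed.

Lemma card_slot_at_two (i : V) : 0 < #|Ar| -> #|slot_at i| = 2.
Proof.
move=> arrows; have [din dout] := deg_le2 i; have [nz_le zero_le] := card_pairs_le i.
rewrite card_slot_at triv_condE.
apply: (vertex_count_arith (z := #|zero_pairs i|)) => //.
- exact: deg_pos.
- exact: card_pairs.
- exact: card_initial_out.
Qed.

Lemma edge_two_halves (i : V) : 0 < #|Ar| -> exists h1 h2 : GHalf Q,
  [/\ h1 <> h2, Defs.ge h1 = i, Defs.ge h2 = i &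
      forall h, Defs.ge h = i -> h = h1 \/ h = h2].
Proof.
move=> arrows; have /cards2P[x [y [neq_xy slots_i]]] : #|[set x | slot_at i x]| == 2.
  by rewrite cardsE card_slot_at_two.
have slot_atE z : slot_at i z = (z \in [set x; y]) by rewrite -slots_i inE.
have [h1 [h1_i h1_x]] : exists h, Defs.ge h = i /\ half_slot h = x.
  by apply: half_slot_onto; rewrite slot_atE set21.
have [h2 [h2_i h2_y]] : exists h, Defs.ge h = i /\ half_slot h = y.
  by apply: half_slot_onto; rewrite slot_atE set22.
exists h1, h2; split=> // [eq_h | h h_i].
  by move: neq_xy; rewrite -h1_x -h2_y eq_h eqxx.
have := slot_at_half h; rewrite h_i slot_atE !inE => /orP[] /eqP h_slot.
  by left; apply: half_slot_inj; rewrite h_slot h1_x.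
by right; apply: half_slot_inj; rewrite h_slot h2_y.
Qed.

Lemma gsucc_iter n (h : GHalf Q) : sval (iter n (@gsucc Q) h) =
  ((sval h).1, ((sval h).2 + n) %% size (pverts (sval h).1)).
Proof.
elim: n => [|n IHn] /=.
  by rewrite addn0 modn_small; [case: (sval h) | case/andP: (svalP h)].
by rewrite IHn /= -[(_ %% _).+1]addn1 modnDml -addnA addn1.
Qed.

Lemma gsucc_iter_cycle (h : GHalf Q) : iter (size (sval h).1.2).+1 (@gsucc Q) h = h.
Proof.
rewrite -size_pverts.
have lt_j : (sval h).2 < size (pverts (sval h).1) by case/andP: (svalP h).
by apply: val_inj; rewrite [val _]gsucc_iter modnDr modn_small // -surjective_pairing.
Qed.

Lemma gsucc_bij : bijective (@gsucc Q).
Proof.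
exists (fun h => iter (size (sval h).1.2) (@gsucc Q) h) => h.
  by rewrite -iterSr; apply: gsucc_iter_cycle.
by rewrite -iterS gsucc_iter_cycle.
Qed.

Lemma gv_gsucc (h : GHalf Q) : gv (gsucc h) = gv h.
Proof. exact: val_inj. Qed.

Lemma gsucc_transitive (h h' : GHalf Q) :
  gv h = gv h' -> exists n, iter n (@gsucc Q) h = h'.
Proof.
move=> /(congr1 val) /= eq_m.
have lt_j : (sval h).2 < size (pverts (sval h).1) by case/andP: (svalP h).
have lt_j' : (sval h').2 < size (pverts (sval h).1) by rewrite eq_m; case/andP: (svalP h').
exists ((sval h').2 + (size (pverts (sval h).1) - (sval h).2)); apply: val_inj.
rewrite [val _]gsucc_iter addnCA subnKC; last exact: ltnW.
by rewrite modnDr modn_small // eq_m -surjective_pairing.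
Qed.

Lemma gvert_half (v : GVert Q) : exists h : GHalf Q, gv h = v /\ Defs.ge h = (sval v).1.
Proof.
have mem0 : in_Mbar (sval v) && (0 < size (pverts (sval v))) by rewrite (svalP v).
by exists (exist _ (sval v, 0) mem0); split; first apply: val_inj.
Qed.

Lemma arrow_halves a : exists h h' : GHalf Q,
  [/\ gv h = gv h', Defs.ge h = s a & Defs.ge h' = t a].
Proof.
have [m [j [mm ma]]] := arrow_on_max_path a.
have le_j : j.+1 <= size m.2 by rewrite -onthTE ma.
exists (max_half mm (ltnW le_j)), (max_half mm le_j).
by split; [apply: val_inj | apply: pverts_source mm ma | apply: pverts_target ma].
Qed.

Lemma gamma_connected (P : GVert Q -> Prop) :
  (forall h h' : GHalf Q, Defs.ge h = Defs.ge h' -> P (gv h) -> P (gv h')) ->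
  forall v w, P v -> P w.
Proof.
move=> P_edge v w Pv.
pose Pat i := forall h : GHalf Q, Defs.ge h = i -> P (gv h).
have Pat_half h : P (gv h) -> Pat (Defs.ge h) by move=> Ph h' h'_at; apply: P_edge Ph.
have Pat_arrow a : Pat (s a) <-> Pat (t a).
  have [h [h' [eq_v <- <-]]] := arrow_halves a.
  by split=> Pat_a; apply: Pat_half; [rewrite -eq_v | rewrite eq_v]; apply: Pat_a.
have [hv [gv_hv hv_at]] := gvert_half v; have [hw [gv_hw hw_at]] := gvert_half w.
suff : Pat (sval w).1 by rewrite -hw_at -gv_hw; apply.
have : Pat (sval v).1 by rewrite -hv_at; apply: Pat_half; rewrite gv_hv.
case: HQ => /(_ (sval v).1 (sval w).1) /connectP[p + ->] _ _ _.
elim: p (sval v).1 => //= i p IHp j /andP[/existsP[a a_ji] path_p] Pat_j.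
apply: IHp path_p _; case/orP: a_ji => /andP[/eqP sa /eqP ta].
  by rewrite -ta -(Pat_arrow a) sa.
by rewrite -sa (Pat_arrow a) ta.
Qed.

Lemma gamma_brauer_graph :
  0 < #|Ar| -> brauer_graph (@gv Q) (@Defs.ge Q) (@gsucc Q) (fun _ => 1).
Proof.
move=> arrows; split.
- by move=> i; have [h1 [h2 [? ? ? ?]]] := edge_two_halves i arrows; exists h1, h2.
- exact: gsucc_bij.
- exact: gv_gsucc.
- exact: gsucc_transitive.
- by split=> //; apply: gamma_connected.
Qed.

Lemma half_is_max (h : GHalf Q) : (sval h).1.2 != [::] -> is_max (sval h).1.
Proof. by have := ghalf_vert h; case: (sval h).1 => v []. Qed.

Lemma lone_half (h : GHalf Q) :
  (forall h', gv h' = gv h -> h' = h) <-> (sval h).1.2 = [::].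
Proof.
split=> [lone | triv h' /(congr1 val) /= eq_m].
  apply/eqP; apply: contraT => nontriv; have mm := half_is_max nontriv.
  have le_1 : 1 <= size (sval h).1.2 by rewrite lt0n size_eq0.
  have same_v j (le_j : j <= _) : gv (max_half mm le_j) = gv h by apply: val_inj.
  have h0 := lone _ (same_v 0 (leq0n _)); have h1 := lone _ (same_v 1 le_1).
  by have := congr1 (fun h => (sval h).2) (etrans h0 (esym h1)).
have pos0 (g : GHalf Q) : (sval g).1 = (sval h).1 -> (sval g).2 = 0.
  by move=> eq_g; case/andP: (svalP g) => _; rewrite eq_g size_pverts triv; case: (sval g).2.
apply: val_inj; rewrite /= [sval h']surjective_pairing [sval h]surjective_pairing.
by rewrite (pos0 h') // (pos0 h) // eq_m.
Qed.

(* The arrow of Q_E leaving the half-edge h = (m, j) in the cyclic order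
   around nu(m): the j-th arrow of m, or beta_m at the last position. *)
Definition arrow_half (a : QEArrow Q) (h : GHalf Q) : Prop :=
  match a with
  | inl al => onth (sval h).1.2 (sval h).2 = Some al
  | inr m => sval h = (sval m, size (sval m).2)
  end.

Lemma arrow_half_nontrivial a h : arrow_half a h -> (sval h).1.2 != [::].
Proof.
case: a => [al | [m mm]] /=; first by case: (sval h).1.2 => //; rewrite onth0n.
by move=> ->; case: m mm => v [].
Qed.

Lemma arrow_half_functional a h h' : arrow_half a h -> arrow_half a h' -> h = h'.
Proof.
move=> ah ah'; apply: val_inj.
case: a ah ah' => [al | m] /=; last by move=> -> ->.
move=> hal h'al; have mm := half_is_max (arrow_half_nontrivial (a := inl al) hal).
have mm' := half_is_max (arrow_half_nontrivial (a := inl al) h'al).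
have [eq_m eq_j] := max_path_position_uniq mm mm' hal h'al.
by rewrite [sval h]surjective_pairing [sval h']surjective_pairing eq_m eq_j.
Qed.

Lemma arrow_half_injective a a' h : arrow_half a h -> arrow_half a' h -> a = a'.
Proof.
case: a a' => [al | m] [al' | m'] /=.
- by move=> ->; case=> ->.
- by move=> + hm'; rewrite hm' /= onth_default.
- by move=> hm; rewrite hm /= onth_default.
- by move=> -> [eq_m _]; congr inr; apply: val_inj.
Qed.

Lemma arrow_half_exists a : exists h, arrow_half a h.
Proof.
case: a => [al | [m mm]].
  have [m [j [mm mal]]] := arrow_on_max_path al.
  have le_j : j <= size m.2 by rewrite ltnW // -onthTE mal.
  by exists (max_half mm le_j).
by exists (max_half mm (leqnn _)).
Qed.

Lemma half_arrow_exists h : (sval h).1.2 != [::] -> exists a, arrow_half a h.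
Proof.
move=> nontriv; have mm := half_is_max nontriv.
have [lt_j | ge_j] := ltnP (sval h).2 (size (sval h).1.2).
  case hj: (onth (sval h).1.2 (sval h).2) => [al|]; first by exists (inl al).
  by move: lt_j; rewrite -onthTE hj.
exists (inr (exist (@is_max Q) _ mm)); rewrite /= [sval h]surjective_pairing; congr pair.
by apply/eqP; rewrite /= eqn_leq ge_j andbT -ltnS -size_pverts; case/andP: (svalP h).
Qed.

Lemma arrow_half_ends a h : arrow_half a h ->
  Defs.ge h = qe_src a /\ Defs.ge (gsucc h) = qe_tgt a.
Proof.
move=> ah; have mm := half_is_max (arrow_half_nontrivial ah).
rewrite /Defs.ge /=; case: a ah => [al hal | m hm] /=.
  have lt_j : (sval h).2 < size (sval h).1.2 by rewrite -onthTE hal.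
  rewrite size_map modn_small ?ltnS //.
  by split; [apply: pverts_source mm hal | apply: pverts_target hal].
by rewrite hm /= size_map modnn pverts_last.
Qed.

Lemma brauer_arrow_nontrivial (h : GHalf Q) :
  ~ (1 = 1 /\ forall h', gv h' = gv h -> h' = h) <-> (sval h).1.2 != [::].
Proof.
split=> [not_lone | nontriv [_ /lone_half triv]]; last by rewrite triv in nontriv.
by apply/eqP => /lone_half lone; apply: not_lone.
Qed.

Lemma qe_brauer_same_quiver :
  same_quiver (@qe_src Q) (@qe_tgt Q)
    (@ba_src _ _ _ (@gv Q) (@Defs.ge Q) (fun _ => 1))
    (@ba_tgt _ _ _ (@gv Q) (@Defs.ge Q) (@gsucc Q) (fun _ => 1)).
Proof.
pose BA := brauer_arrow (@gv Q) (fun _ => 1).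
have [f [f_bij f_half]] :
    exists f : QEArrow Q -> BA, bijective f /\ forall a, arrow_half a (sval (f a)).
  apply: (@rel_bijective _ _ (fun a (b : BA) => arrow_half a (sval b)))
    => [a | b | a b b' ab ab' | a a' b ab a'b].
  - have [h ah] := arrow_half_exists a.
    have nontriv := arrow_half_nontrivial ah.
    by exists (exist _ h (proj2 (brauer_arrow_nontrivial h) nontriv)).
  - by apply: half_arrow_exists; apply/brauer_arrow_nontrivial; apply: (svalP b).
  - exact: eq_sig_hprop (fun _ => proof_irrelevance _) _ _ (arrow_half_functional ab ab').
  - exact: arrow_half_injective ab a'b.
by exists f; split=> // a; apply: arrow_half_ends.
Qed.

End GentleGamma.

Theorem lemma3p3 (k : closedFieldType) (Q : bquiver) (HQ : gentle Q) :
  (0 < #|qA Q| ->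
     brauer_graph (@gv Q) (@ge Q) (@gsucc Q) (fun _ : GVert Q => 1%N)) /\
  same_quiver (@qe_src Q) (@qe_tgt Q)
    (@ba_src _ _ _ (@gv Q) (@ge Q) (fun _ : GVert Q => 1%N))
    (@ba_tgt _ _ _ (@gv Q) (@ge Q) (@gsucc Q) (fun _ : GVert Q => 1%N)).
Proof.
split; first exact: gamma_brauer_graph.
exact: qe_brauer_same_quiver.
Qed.
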